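(* Let $G=(\mathcal{S},\mathcal{A})$ be a directed acyclic graph (the state graph of a GFlowNet), equipped with a forward policy $P_F(\cdot\mid s)$, a probability distribution on $\mathrm{Child}(s)$ for every state $s$ with nonempty child set, and a backward policy $P_B(\cdot\mid s')$, a probability distribution on the parents of $s'$. Let $\tau=(s_0\to s_1\to\dots\to s_n)$ be a trajectory in $G$ (so $s_{t+1}\in\mathrm{Child}(s_t)$) such that every $s_t$, $0\le t\le n$, has a nonempty child set. Then $$\mathcal{L}_{\mathrm{OT}}(\tau)\le \mathcal{L}_{\mathrm{UB}}(\tau):=\sum_{t=0}^{n-1}\Big[\mathbf{H}\big(P_F(\cdot\mid s_t),P_B^{*}(\cdot\mid s_t)\big)-\log P_F(s_{t+1}\mid s_t)+\mathbf{H}\big(P_F(\cdot\mid s_{t+1})\big)\Big],$$ where all quantities take values in $[0,+\infty]$ (with $-\log 0=+\infty$).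
   Context: For neighbor states $s\to s'$ with $\mathrm{Child}(s)=\{u_1,\dots,u_k\}$ and $\mathrm{Child}(s')=\{v_1,\dots,v_l\}$, define the cost matrix $\mathbf{C}\in[0,\infty]^{k\times l}$ by: $\mathbf{C}_{ij}=0$ if $u_i=v_j$; $\mathbf{C}_{ij}=\min\big(-\log(P_B(s\mid u_i)P_F(s'\mid s)P_F(v_j\mid s')),\,-\log P_F(v_j\mid u_i)\big)$ if $u_i\ne v_j$ and $u_i\to v_j$ is an edge of $G$; and $\mathbf{C}_{ij}=-\log(P_B(s\mid u_i)P_F(s'\mid s)P_F(v_j\mid s'))$ otherwise. The optimal transport distance is $\mathrm{OT}_{\mathbf{C}}(P_F(\cdot\mid s),P_F(\cdot\mid s'))=\min_{\pi\in\Pi}\sum_{i,j}\mathbf{C}_{ij}\pi_{ij}$, where $\Pi=\{\pi\in\mathbb{R}_{+}^{k\times l}:\pi\mathbf{1}_l=P_F(\cdot\mid s),\ \pi^{\top}\mathbf{1}_k=P_F(\cdot\mid s')\}$. The path regularization is $\mathcal{L}_{\mathrm{OT}}(\tau)=\sum_{t=0}^{n-1}\mathrm{OT}_{\mathbf{C}_t}(P_F(\cdot\mid s_t),P_F(\cdot\mid s_{t+1}))$ with $\mathbf{C}_t$ the cost matrix above for the pair $s_t\to s_{t+1}$. The pseudo backward policy at $s$ with children $u_1,\dots,u_k$ is the vector $P_B^{*}(\cdot\mid s)=(P_B^{*}(u_1\mid s),\dots,P_B^{*}(u_k\mid s))$ with $P_B^{*}(u_i\mid s)=P_B(s\mid u_i)$.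 For vectors $p,q$ indexed by $\mathrm{Child}(s)$, $\mathbf{H}(p,q)=-\sum_i p_i\log q_i$ (cross-entropy) and $\mathbf{H}(p)=-\sum_i p_i\log p_i$ (entropy). *)

From HB Require Import structures.
From mathcomp Require Import all_boot all_order all_algebra.
From mathcomp Require Import all_classical all_reals.
From mathcomp Require Import ereal exp.
Set Implicit Arguments. Unset Strict Implicit. Unset Printing Implicit Defensive.
Import Order.TTheory GRing.Theory Num.Theory.
Local Open Scope ring_scope.
Local Open Scope ereal_scope.

Section GFN.
Variables (R : realType) (T : finType) (E : rel T).

Definition acyclic_graph : Prop := forall x y, E x y -> ~~ connect E y x.

Definition nlog (x : R) : \bar R := if (x <= 0)%R then +oo else (- ln x)%:E.

(* PF s u = P_F(u | s), a probability distribution on Child(s) *)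
Definition forward_policy (PF : T -> T -> R) : Prop :=
  (forall s u, E s u -> (0 <= PF s u)%R) /\
  (forall s, (exists u, E s u) -> (\sum_(u | E s u) PF s u)%R = 1%R).

(* PB s' s = P_B(s | s'), a probability distribution on the parents of s' *)
Definition backward_policy (PB : T -> T -> R) : Prop :=
  (forall s' s, E s s' -> (0 <= PB s' s)%R) /\
  (forall s', (exists s, E s s') -> (\sum_(s | E s s') PB s' s)%R = 1%R).

Variables (PF PB : T -> T -> R).

Definition cost (s s' u v : T) : \bar R :=
  if u == v then 0
  else if E u v then
    Order.min (nlog (PB u s * PF s s' * PF s' v)%R) (nlog (PF u v))
  else nlog (PB u s * PF s s' * PF s' v)%R.

Definition coupling (s s' : T) (pi : T -> T -> R) : Prop :=
  (forall u v, E s u -> E s' v -> (0 <= pi u v)%R) /\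
  (forall u, E s u -> (\sum_(v | E s' v) pi u v)%R = PF s u) /\
  (forall v, E s' v -> (\sum_(u | E s u) pi u v)%R = PF s' v).

Definition OT (s s' : T) : \bar R :=
  ereal_inf [set x | exists pi, coupling s s' pi /\
     x = \sum_(u | E s u) \sum_(v | E s' v) (pi u v)%:E * cost s s' u v].

(* H(P_F(.|s), P_B^*(.|s)) = - sum_i P_F(u_i|s) log P_B(s|u_i) *)
Definition cross_entropy_FB (s : T) : \bar R :=
  \sum_(u | E s u) (PF s u)%:E * nlog (PB u s).

Definition entropy_F (s : T) : \bar R :=
  \sum_(u | E s u) (PF s u)%:E * nlog (PF s u).

(* trajectory tau = (traj 0 -> ... -> traj n) *)
Definition L_OT (n : nat) (traj : nat -> T) : \bar R :=
  \sum_(t < n) OT (traj t) (traj t.+1).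

Definition L_UB (n : nat) (traj : nat -> T) : \bar R :=
  \sum_(t < n) (cross_entropy_FB (traj t) + nlog (PF (traj t) (traj t.+1))
                + entropy_F (traj t.+1)).

End GFN.

(** Bound each OT term by the cost of the product coupling
    [P_F(.|s) (x) P_F(.|s')].  Every entry of the cost matrix is at most
    [-log(P_B(s|u) P_F(s'|s) P_F(v|s'))], which splits as
    [-log P_B(s|u) - log P_F(s'|s) - log P_F(v|s')]; a separable cost has
    the same expectation under the product coupling as the sum of the three
    marginal expectations, which are exactly the three terms of [L_UB]. *)

From HB Require Import structures.
From mathcomp Require Import all_boot all_order all_algebra.
From mathcomp Require Import all_classical all_reals.
From mathcomp Require Import ereal exp.
Set Implicit Arguments. Unset Strict Implicit. Unset Printing Implicit Defensive.
Import Order.TTheory GRing.Theory Num.Theory.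
Local Open Scope ring_scope.
Local Open Scope ereal_scope.

Section NegLog.
Variable R : realType.

Lemma nlog_ge0 (x : R) : (x <= 1)%R -> 0 <= nlog x.
Proof.
rewrite /nlog => x_le1; case: ifPn => // _.
by rewrite lee_fin oppr_ge0 ln_le0.
Qed.

Lemma nlogM (x y : R) :
  (0 <= x)%R -> (0 <= y)%R -> nlog (x * y) = nlog x + nlog y.
Proof.
rewrite /nlog => x_ge0 y_ge0.
have [x_le0|x_gt0] := leP x 0%R.
  have -> : x = 0%R by apply/eqP; rewrite eq_le x_le0 x_ge0.
  by rewrite mul0r lexx addye //; case: ifPn.
have [y_le0|y_gt0] := leP y 0%R.
  have -> : y = 0%R by apply/eqP; rewrite eq_le y_le0 y_ge0.
  by rewrite mulr0 lexx addey.
by rewrite leNgt mulr_gt0 //= lnM ?posrE // opprD EFinD.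
Qed.

End NegLog.

Section FiniteProbability.
Variables (R : realType) (T : finType).

Definition is_prob (P : pred T) (p : T -> R) : Prop :=
  (forall i, P i -> 0 <= p i)%R /\ (\sum_(i | P i) p i = 1)%R.

Lemma prob_le1 (P : pred T) (p : T -> R) i : is_prob P p -> P i -> (p i <= 1)%R.
Proof.
move=> [p_ge0 p_sum1] Pi; rewrite -p_sum1 (bigD1 i) //= lerDl.
by apply: sumr_ge0 => j /andP[Pj _]; exact: p_ge0.
Qed.

Lemma sume_prob_const (P : pred T) (p : T -> R) (K : \bar R) :
  is_prob P p -> 0 <= K -> \sum_(i | P i) (p i)%:E * K = K.
Proof.
move=> [p_ge0 p_sum1] K_ge0.
rewrite -ge0_sume_distrl; last by move=> i Pi; rewrite lee_fin p_ge0.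
by rewrite sumEFin p_sum1 mul1e.
Qed.

Variables (P Q : pred T) (p q : T -> R).
Hypotheses (p_prob : is_prob P p) (q_prob : is_prob Q q).

Lemma sume_prod_prob_l (h : T -> \bar R) : (forall u, P u -> 0 <= h u) ->
  \sum_(u | P u) \sum_(v | Q v) (p u * q v)%:E * h u =
  \sum_(u | P u) (p u)%:E * h u.
Proof.
move=> h_ge0; apply: eq_bigr => u Pu.
under eq_bigr do rewrite mulrC EFinM -muleA.
by rewrite sume_prob_const // mule_ge0 ?h_ge0 // lee_fin p_prob.1.
Qed.

Lemma sume_prod_prob_r (h : T -> \bar R) : (forall v, Q v -> 0 <= h v) ->
  \sum_(u | P u) \sum_(v | Q v) (p u * q v)%:E * h v =
  \sum_(v | Q v) (q v)%:E * h v.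
Proof.
move=> h_ge0; rewrite exchange_big; apply: eq_bigr => v Qv.
under eq_bigr do rewrite EFinM -muleA.
by rewrite sume_prob_const // mule_ge0 ?h_ge0 // lee_fin q_prob.1.
Qed.

Lemma sume_prod_prob_sep (f g : T -> \bar R) (b : \bar R) :
  (forall u, P u -> 0 <= f u) -> 0 <= b -> (forall v, Q v -> 0 <= g v) ->
  \sum_(u | P u) \sum_(v | Q v) (p u * q v)%:E * (f u + b + g v) =
  \sum_(u | P u) (p u)%:E * f u + b + \sum_(v | Q v) (q v)%:E * g v.
Proof.
move=> f_ge0 b_ge0 g_ge0.
transitivity (\sum_(u | P u) \sum_(v | Q v)
  ((p u * q v)%:E * f u + (p u * q v)%:E * b + (p u * q v)%:E * g v)).
  apply: eq_bigr => u Pu; apply: eq_bigr => v Qv.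
  by rewrite !ge0_muleDr ?adde_ge0 ?f_ge0 ?g_ge0.
under eq_bigr do rewrite !big_split.
rewrite !big_split /= (sume_prod_prob_l (h := f)) //.
by rewrite sume_prod_prob_r // sume_prob_const // sume_prod_prob_r.
Qed.

End FiniteProbability.

Section OptimalTransportBound.
Variables (R : realType) (T : finType) (E : rel T) (PF PB : T -> T -> R).
Hypotheses (PF_policy : forward_policy E PF) (PB_policy : backward_policy E PB).

Lemma forward_prob s : (exists u, E s u) -> is_prob (E s) (PF s).
Proof. by case: PF_policy => PF_ge0 PF_sum1 s_child; split; auto. Qed.

Lemma backward_prob s u : E s u -> is_prob (fun x => E x u) (PB u).
Proof.
case: PB_policy => PB_ge0 PB_sum1 Esu.
by split; [exact: PB_ge0 | apply: PB_sum1; exists s].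
Qed.

Lemma coupling_product s s' : (exists u, E s u) -> (exists v, E s' v) ->
  coupling E PF s s' (fun u v => PF s u * PF s' v)%R.
Proof.
move=> /forward_prob[PFs_ge0 PFs_sum1] /forward_prob[PFs'_ge0 PFs'_sum1].
split; first by move=> u v Esu Es'v; rewrite mulr_ge0 ?PFs_ge0 ?PFs'_ge0.
split; first by move=> u _; rewrite -mulr_sumr PFs'_sum1 mulr1.
by move=> v _; rewrite -mulr_suml PFs_sum1 mul1r.
Qed.

Lemma cost_le_nlog_path s s' u v : (PB u s * PF s s' * PF s' v <= 1)%R ->
  cost E PF PB s s' u v <= nlog (PB u s * PF s s' * PF s' v).
Proof.
rewrite /cost => path_le1; case: ifPn => _; first exact: nlog_ge0.
by case: ifPn => _; rewrite ?ge_min lexx.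
Qed.

Lemma OT_le_UB_step s s' : E s s' -> (exists u, E s u) -> (exists v, E s' v) ->
  OT E PF PB s s' <=
  cross_entropy_FB E PF PB s + nlog (PF s s') + entropy_F E PF s'.
Proof.
move=> Ess' s_child s'_child.
have PFs := forward_prob s_child; have PFs' := forward_prob s'_child.
have PB_ge0 u : E s u -> (0 <= PB u s)%R by move=> Esu; exact: (backward_prob Esu).1.
have PB_le1 u : E s u -> (PB u s <= 1)%R.
  by move=> Esu; exact: prob_le1 (backward_prob Esu) Esu.
apply: le_trans (_ : _ <= \sum_(u | E s u) \sum_(v | E s' v)
    (PF s u * PF s' v)%:E * cost E PF PB s s' u v) _.
  by apply: ereal_inf_lbound; exists (fun u v => PF s u * PF s' v)%R;
    split => //; exact: coupling_product.
rewrite /cross_entropy_FB /entropy_F -sume_prod_prob_sep //; first last.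
- by move=> v Es'v; rewrite nlog_ge0 // (prob_le1 PFs').
- by rewrite nlog_ge0 // (prob_le1 PFs).
- by move=> u Esu; rewrite nlog_ge0 ?PB_le1.
apply: lee_sum => u Esu; apply: lee_sum => v Es'v.
apply: lee_wpmul2l; first by rewrite lee_fin mulr_ge0 ?PFs.1 ?PFs'.1.
have [PBu_ge0 PBu_le1] := (PB_ge0 u Esu, PB_le1 u Esu).
have [PFss'_ge0 PFss'_le1] := (PFs.1 s' Ess', prob_le1 PFs Ess').
have [PFs'v_ge0 PFs'v_le1] := (PFs'.1 v Es'v, prob_le1 PFs' Es'v).
rewrite -!nlogM ?mulr_ge0 //; apply: cost_le_nlog_path.
by rewrite !mulr_ile1 ?mulr_ge0.
Qed.

End OptimalTransportBound.

Theorem theorem1 (R : realType) (T : finType) (E : rel T)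
    (PF PB : T -> T -> R) (n : nat) (traj : nat -> T) :
  acyclic_graph E ->
  forward_policy E PF ->
  backward_policy E PB ->
  (forall t, (t < n)%N -> E (traj t) (traj t.+1)) ->
  (forall t, (t <= n)%N -> exists u, E (traj t) u) ->
  L_OT E PF PB n traj <= L_UB E PF PB n traj.
Proof.
move=> _ PF_policy PB_policy traj_edge traj_child.
apply: lee_sum => t _; apply: OT_le_UB_step => //.
- exact: traj_edge.
- exact/traj_child/ltnW.
- exact: traj_child.
Qed.
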